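(* Let $n$ and $0<n_1<\cdots<n_d<n$ be integers with $m_1=n_1$, $m_k=n_k-n_{k-1}$ ($2\le k\le d$), $m_{d+1}=n-n_d$, and regard $\mathrm{Flag}(n_1,\dots,n_d;n)=\{(VJ_1V^{\mathsf T},\dots,VJ_{d+1}V^{\mathsf T}):V\in\mathrm{O}(n)\}$ as a submanifold of $(\mathbb{R}^{n\times n})^{d+1}$ with the Frobenius inner product. Let $V(t)$ be a differentiable curve in $\mathrm{O}(n)$, $\Lambda(t)=V(t)^{\mathsf T}\dot V(t)$, with $\Lambda(k,k)(t)\equiv0$ for $k=1,\dots,d+1$, and $c(t)=V(t)(J_1,\dots,J_{d+1})V(t)^{\mathsf T}$. Define \begin{align*} T_1(t)&=V(t)\big(\dot\Lambda J_1-J_1\dot\Lambda,\dots,\dot\Lambda J_{d+1}-J_{d+1}\dot\Lambda\big)V(t)^{\mathsf T},\\ T_2(t)&=V(t)\big(\Lambda^2J_1+J_1\Lambda^2,\dots,\Lambda^2J_{d+1}+J_{d+1}\Lambda^2\big)V(t)^{\mathsf T},\\ T_3(t)&=V(t)\big(\Lambda J_1\Lambda,\dots,\Lambda J_{d+1}\Lambda\big)V(t)^{\mathsf T}, \end{align*} with $\Lambda=\Lambda(t)$. Then (1) $T_1(t)\in\mathbb{T}_{c(t)}\mathrm{Flag}(n_1,\dots,n_d;n)$; (2) the orthogonal projection of $T_2(t)$ onto $\mathbb{T}_{c(t)}\mathrm{Flag}(n_1,\dots,n_d;n)$ is zero; (3) the orthogonal projection of $T_3(t)$ onto $\mathbb{T}_{c(t)}\mathrm{Flag}(n_1,\dots,n_d;n)$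 is zero.
   Context: $J_k=\operatorname{diag}(-I_{m_1},\dots,-I_{m_{k-1}},I_{m_k},-I_{m_{k+1}},\dots,-I_{m_{d+1}})$ for $k=1,\dots,d+1$. $V(X_1,\dots,X_{d+1})V^{\mathsf T}$ denotes $(VX_1V^{\mathsf T},\dots,VX_{d+1}V^{\mathsf T})$. For an $n\times n$ matrix $M$, $M(p,q)$ denotes its $(p,q)$ block in the partition $n=m_1+\cdots+m_{d+1}$. *)

From HB Require Import structures.
From mathcomp Require Import all_boot all_order all_algebra.
From mathcomp Require Import all_classical all_reals all_analysis.
Unset Printing Implicit Defensive.
Import Order.TTheory GRing.Theory Num.Theory.
Import numFieldNormedType.Exports.
Local Open Scope classical_set_scope.
Local Open Scope ring_scope.

Section FlagDefs.
Variable R : realType.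

Definition mx_derivable {m p : nat} (f : R -> 'M[R]_(m, p)) (t : R) : Prop :=
  forall i j, derivable (fun s => f s i j) t 1.

Definition mx_deriv {m p : nat} (f : R -> 'M[R]_(m, p)) (t : R) : 'M[R]_(m, p) :=
  \matrix_(i, j) derive1 (fun s => f s i j) t.

Definition ext (nn : nat -> nat) (d n : nat) (k : nat) : nat :=
  if k == 0%N then 0%N else if (k <= d)%N then nn k else n.

(* index i (0-based) lies in the block number k+1 (k : 0-based block index). *)
Definition in_block (nn : nat -> nat) (d n : nat) (k : nat) (i : nat) : bool :=
  (ext nn d n k <= i < ext nn d n k.+1)%N.

(* Jm k = J_{k+1} : diag(-I, .., -I, I_{m_{k+1}}, -I, .., -I). *)
Definition Jm (nn : nat -> nat) (d n : nat) (k : 'I_d.+1) : 'M[R]_n :=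
  \matrix_(i, j) (if i == j then (if in_block nn d n k i then 1 else -1) else 0).

Definition orthmx {n : nat} (V : 'M[R]_n) : Prop := V^T *m V = 1%:M.

Definition Flag (nn : nat -> nat) (d n : nat) : set ('I_d.+1 -> 'M[R]_n) :=
  [set c | exists V : 'M[R]_n, orthmx V /\
     forall k, c k = V *m Jm nn d n k *m V^T].

Definition tangent_space {d n : nat} (S : set ('I_d.+1 -> 'M[R]_n))
    (c : 'I_d.+1 -> 'M[R]_n) : set ('I_d.+1 -> 'M[R]_n) :=
  [set T | exists g : R -> ('I_d.+1 -> 'M[R]_n),
     (forall s, S (g s)) /\ g 0 = c /\
     forall k, mx_derivable (fun s => g s k) 0 /\ mx_deriv (fun s => g s k) 0 = T k].

Definition frob {n : nat} (A B : 'M[R]_n) : R := \sum_i \sum_j A i j * B i j.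
Definition tinner {d n : nat} (X Y : 'I_d.+1 -> 'M[R]_n) : R :=
  \sum_k frob (X k) (Y k).

Definition is_orth_proj {d n : nat} (S : set ('I_d.+1 -> 'M[R]_n))
    (x p : 'I_d.+1 -> 'M[R]_n) : Prop :=
  S p /\ forall y, S y -> tinner (fun k => x k - p k) y = 0.

End FlagDefs.
Arguments mx_derivable {R m p}.
Arguments mx_deriv {R m p}.
Arguments orthmx {R n}.
Arguments frob {R n}.
Arguments tinner {R d n}.
Arguments is_orth_proj {R d n}.
Arguments tangent_space {R d n}.

(* Let Z = V^T Y V for a tangent vector Y at c = V J V^T.  Differentiating c_k^2 = 1 and
   \sum_k c_k = (1 - d) 1 along curves in the flag manifold shows that Z_k anticommutes with
   J_k and that \sum_k Y_k = 0.  Conversely, for a skew X, the curve V W(s) J_k W(s)^T V^T,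
   where W is a product of Givens rotations with W 0 = 1 and W' 0 = X, has velocity
   V (X J_k - J_k X) V^T; as dLam is skew, this gives (1).  For (2),
   <Lam^2 J + J Lam^2, Z> = tr (Lam^2 (Z J + J Z)) = 0.  For (3), write J_k = 2 E_k - 1 with E_k
   the diagonal projector onto the k-th block: Z = Z E + E Z and E Lam E = 0 kill
   <Lam E Lam, Z>, so <Lam J_k Lam, Z_k> = - tr (Lam^2 Z_k), which sums to 0 over k. *)

From HB Require Import structures.
From mathcomp Require Import all_boot all_order all_algebra.
From mathcomp Require Import all_classical all_reals all_analysis.
From mathcomp Require Import zify ring lra.
Import Order.TTheory GRing.Theory Num.Theory.
Local Open Scope classical_set_scope.
Local Open Scope ring_scope.

Section MatrixDerivative.
Context {R : realType}.

Definition is_mx_derive {m p : nat} (F : R -> 'M[R]_(m, p)) (t : R) (D : 'M[R]_(m, p)) :=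
  forall i j, is_derive t 1 (fun s => F s i j) (D i j).

Context {m p : nat} {t : R}.
Implicit Types (F G : R -> 'M[R]_(m, p)) (D A B : 'M[R]_(m, p)).

Lemma ex_mx_derive {F D} : is_mx_derive F t D -> mx_derivable F t.
Proof. by move=> FD i j; case: (FD i j). Qed.

Lemma mx_derive_val {F D} : is_mx_derive F t D -> mx_deriv F t = D.
Proof. by move=> FD; apply/matrixP => i j; rewrite mxE derive1E; case: (FD i j). Qed.

Lemma mx_derivableP {F} : mx_derivable F t -> is_mx_derive F t (mx_deriv F t).
Proof. by move=> Fd i j; rewrite mxE derive1E; apply: derivableP. Qed.

Lemma is_mx_derive_unique {F A B} : is_mx_derive F t A -> is_mx_derive F t B -> A = B.
Proof. by move=> /mx_derive_val <- /mx_derive_val. Qed.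

Lemma is_mx_derive_cst D : is_mx_derive (fun _ => D) t 0.
Proof. by move=> i j; rewrite mxE; exact: is_derive_cst. Qed.

Lemma is_mx_derive_constant {F} D : (forall s, F s = D) -> is_mx_derive F t 0.
Proof. by move=> FD; rewrite (funext FD); exact: is_mx_derive_cst. Qed.

Lemma is_mx_derive_constant_eq0 {F A} D :
  (forall s, F s = D) -> is_mx_derive F t A -> A = 0.
Proof. by move=> /is_mx_derive_constant FD0 FA; exact: is_mx_derive_unique FA FD0. Qed.

Lemma is_mx_deriveN {F A} : is_mx_derive F t A -> is_mx_derive (fun s => - F s) t (- A).
Proof.
move=> FA i j; rewrite mxE.
have -> : (fun s => (- F s) i j) = - (fun s => F s i j).
  by apply/funext => s; rewrite /= mxE.
exact: is_deriveN.
Qed.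

Lemma is_mx_derive_tr {F A} : is_mx_derive F t A -> is_mx_derive (fun s => (F s)^T) t A^T.
Proof.
move=> FA i j; rewrite mxE.
by rewrite (_ : (fun s => _) = fun s => F s j i) //; apply/funext => s; rewrite mxE.
Qed.

Lemma is_mx_derive_sum {N} {F : 'I_N -> R -> 'M[R]_(m, p)} {A : 'I_N -> 'M[R]_(m, p)} :
  (forall k, is_mx_derive (F k) t (A k)) ->
  is_mx_derive (fun s => \sum_k F k s) t (\sum_k A k).
Proof.
move=> FA i j.
have -> : (fun s => (\sum_k F k s) i j) = \sum_k (fun s => F k s i j).
  by apply/funext => s; rewrite fct_sumE summxE.
by rewrite summxE; apply: is_derive_sum => k; exact: FA.
Qed.

Lemma is_mx_deriveM {q F} {G : R -> 'M[R]_(p, q)} {A} {B : 'M[R]_(p, q)} :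
  is_mx_derive F t A -> is_mx_derive G t B ->
  is_mx_derive (fun s => F s *m G s) t (A *m G t + F t *m B).
Proof.
move=> FA GB i j.
have -> : (fun s => (F s *m G s) i j) = \sum_(l < p) ((fun s => F s i l) * (fun s => G s l j)).
  by apply/funext => s; rewrite mxE fct_sumE.
apply: is_derive_eq; first by apply: is_derive_sum => l; exact: is_deriveM.
rewrite !mxE -big_split /=; apply: eq_bigr => l _.
by rewrite /GRing.scale /= addrC [G t l j * _]mulrC.
Qed.

End MatrixDerivative.

Section Blocks.
Variables (R : realType) (nn : nat -> nat) (d n : nat).
Hypothesis ext_lt : forall k, (k <= d)%N -> (ext nn d n k < ext nn d n k.+1)%N.

Lemma leq_ext a b : (a <= b <= d.+1)%N -> (ext nn d n a <= ext nn d n b)%N.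
Proof.
elim: b => [|b IH] /andP[ab bd]; first by move: ab; rewrite leqn0 => /eqP ->.
move: ab; rewrite leq_eqVlt => /orP[/eqP -> // | ab].
by apply: leq_trans (IH _) (ltnW (ext_lt b bd)); rewrite -ltnS ab ltnW.
Qed.

Lemma in_block_inj {k l : 'I_d.+1} {i} :
  in_block nn d n k i -> in_block nn d n l i -> k = l.
Proof.
rewrite /in_block => /andP[k1 k2] /andP[l1 l2]; apply/val_inj.
have [lk|kl|//] := ltngtP k l.
- by have := @leq_ext k.+1 l; rewrite lk ltnW //= => /(_ isT); lia.
- by have := @leq_ext l.+1 k; rewrite kl ltnW //= => /(_ isT); lia.
Qed.

Lemma in_block_exists (i : 'I_n) : exists k : 'I_d.+1, in_block nn d n k i.
Proof.
suff block_below m : (m <= d.+1)%N -> forall i, (i < ext nn d n m)%N ->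
    exists2 k, (k < m)%N & in_block nn d n k i.
  have [|k km ik] := block_below d.+1 (leqnn _) i; first by rewrite /ext /= ltnn.
  by exists (Ordinal km).
elim: m => [|m IH] md j //; case: (ltnP j (ext nn d n m)) => jm jm1.
  by have [k km jk] := IH (ltnW md) j jm; exists k; first exact: ltnW.
by exists m; rewrite // /in_block jm jm1.
Qed.

Definition block_proj (k : 'I_d.+1) : 'M[R]_n :=
  diag_mx (\row_i (in_block nn d n k i)%:R).

Lemma tr_block_proj k : (block_proj k)^T = block_proj k.
Proof. exact: tr_diag_mx. Qed.

Lemma block_proj_idem k : block_proj k *m block_proj k = block_proj k.
Proof.
rewrite /block_proj mul_diag_mx; apply/matrixP => i j; rewrite !mxE.
by case: in_block; rewrite ?mul1r ?mul0r ?mul0rn.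
Qed.

Lemma sum_block_proj : \sum_k block_proj k = 1%:M.
Proof.
apply/matrixP => i j; rewrite summxE !mxE.
have [k ik] := in_block_exists i.
rewrite (bigD1 k) //= big1 ?addr0 => [|l lk]; first by rewrite !mxE ik.
rewrite !mxE; case il: in_block; last by rewrite mul0rn.
by rewrite (in_block_inj il ik) eqxx in lk.
Qed.

Lemma block_proj_sandwich (k : 'I_d.+1) (A : 'M[R]_n) :
  (forall i j : 'I_n, in_block nn d n k i -> in_block nn d n k j -> A i j = 0) ->
  block_proj k *m A *m block_proj k = 0.
Proof.
move=> A0; rewrite /block_proj mul_diag_mx mul_mx_diag; apply/matrixP => i j.
rewrite !mxE; case ik: (in_block _ _ _ k i); case jk: (in_block _ _ _ k j);
  by rewrite ?mul0r ?mulr0 // A0 ?mulr0 ?mul0r.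
Qed.

Lemma JmE (k : 'I_d.+1) : Jm R nn d n k = 2%:R *: block_proj k - 1%:M.
Proof.
apply/matrixP => i j; rewrite !mxE; case: eqVneq => [->|_]; last by rewrite subr0 mulr0.
by case: in_block; rewrite /= ?mulr1 ?mulr0; lra.
Qed.

Lemma tr_Jm (k : 'I_d.+1) : (Jm R nn d n k)^T = Jm R nn d n k.
Proof. by rewrite JmE linearB linearZ /= tr_block_proj trmx1. Qed.

Lemma Jm_sqr (k : 'I_d.+1) : Jm R nn d n k *m Jm R nn d n k = 1%:M.
Proof.
rewrite JmE mulmxBl !mulmxBr !mulmx1 mul1mx -!scalemxAl -!scalemxAr block_proj_idem.
by apply/matrixP => i j; rewrite !mxE; ring.
Qed.

Lemma sum_Jm : \sum_k Jm R nn d n k = (2 - d.+1%:R) *: 1%:M.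
Proof.
under eq_bigr do rewrite JmE.
by rewrite sumrB -scaler_sumr sum_block_proj sumr_const card_ord scalerBl !scaler_nat.
Qed.

End Blocks.

Section Givens.
Context {R : realType} {n : nat}.
Variables p q : 'I_n.
Hypothesis pq : p != q.

Definition plane_proj : 'M[R]_n := delta_mx p p + delta_mx q q.
Definition plane_skew : 'M[R]_n := delta_mx p q - delta_mx q p.

Let qp : q != p. Proof. by rewrite eq_sym. Qed.

Local Notation delta_simpl := (mulmxDl, mulmxDr, mulmxBl, mulmxBr, mulmxN, mulNmx,
  mul_delta_mx_cond, eqxx, negPf pq, negPf qp, mulr0n, mulr1n,
  addr0, add0r, subr0, sub0r, oppr0, opprD, opprK).

Lemma plane_proj_idem : plane_proj *m plane_proj = plane_proj.
Proof. by rewrite /plane_proj !delta_simpl. Qed.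

Lemma plane_proj_skew : plane_proj *m plane_skew = plane_skew.
Proof. by rewrite /plane_proj /plane_skew !delta_simpl. Qed.

Lemma plane_skew_proj : plane_skew *m plane_proj = plane_skew.
Proof. by rewrite /plane_proj /plane_skew !delta_simpl addrC. Qed.

Lemma plane_skew_sqr : plane_skew *m plane_skew = - plane_proj.
Proof. by rewrite /plane_proj /plane_skew !delta_simpl addrC. Qed.

Lemma tr_plane_proj : plane_proj^T = plane_proj.
Proof. by rewrite linearD /= !trmx_delta. Qed.

Lemma tr_plane_skew : plane_skew^T = - plane_skew.
Proof. by rewrite linearB /= !trmx_delta opprB. Qed.

Definition givens (th : R) : 'M[R]_n :=
  1%:M + (cos th - 1) *: plane_proj + sin th *: plane_skew.

Lemma givens_orth th : orthmx (givens th).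
Proof.
rewrite /orthmx.
have -> : (givens th)^T = 1%:M + (cos th - 1) *: plane_proj - sin th *: plane_skew.
  by rewrite /givens 2!linearD 2!linearZ /= trmx1 tr_plane_proj tr_plane_skew scalerN.
rewrite /givens !mulmxDl !mulmxDr ?mulmxBl ?mulmxBr ?mulmxN ?mulNmx !mul1mx !mulmx1.
rewrite -!scalemxAl -!scalemxAr plane_proj_idem plane_proj_skew plane_skew_proj.
rewrite plane_skew_sqr !scalerA ?scalerN; apply/eqP; rewrite -subr_eq0; apply/eqP.
transitivity ((cos th ^+ 2 + sin th ^+ 2 - 1) *: (plane_proj : 'M[R]_n)).
  by apply/matrixP => i j; rewrite !mxE; ring.
by rewrite cos2Dsin2 subrr scale0r.
Qed.

Lemma givens0 : givens 0 = 1%:M.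
Proof. by rewrite /givens cos0 sin0 subrr !scale0r !addr0. Qed.

Lemma is_mx_derive_givens (y : R) :
  is_mx_derive (fun s => givens (s * y)) 0 (y *: plane_skew).
Proof.
have lin : is_derive (0 : R) 1 (fun s => s * y) y.
  by apply: is_derive_eq; rewrite scaler0 add0r; exact: mulr1.
move=> i j; rewrite (_ : (fun s => _) = cst ((1%:M : 'M[R]_n) i j)
    + ((cos \o (fun s => s * y)) - cst 1) * cst (plane_proj i j)
    + (sin \o (fun s => s * y)) * cst (plane_skew i j)); last first.
  by apply/funext => s; rewrite /givens !mxE.
(* The derivative itself is found by instance resolution, with [lin] for the inner map. *)
apply: is_derive_eq.
rewrite mul0r sin0 cos0 !mxE /GRing.scale /=; ring.
Qed.

End Givens.

Section OrthogonalVelocity.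
Context {R : realType} {n : nat}.

Lemma orthmx1 : orthmx (1%:M : 'M[R]_n).
Proof. by rewrite /orthmx trmx1 mulmx1. Qed.

Lemma orthmxM (U W : 'M[R]_n) : orthmx U -> orthmx W -> orthmx (U *m W).
Proof.
rewrite /orthmx trmx_mul => oU oW.
by rewrite mulmxA -(mulmxA _ _ U) oU mulmx1.
Qed.

Definition orth_velocity (X : 'M[R]_n) := exists W : R -> 'M[R]_n,
  [/\ forall s, orthmx (W s), W 0 = 1%:M & is_mx_derive W 0 X].

Lemma orth_velocity0 : orth_velocity 0.
Proof. by exists (fun _ => 1%:M); split=> // [s|]; [exact: orthmx1 | exact: is_mx_derive_cst]. Qed.

Lemma orth_velocityD X Y : orth_velocity X -> orth_velocity Y -> orth_velocity (X + Y).
Proof.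
move=> [W1 [oW1 W10 dW1]] [W2 [oW2 W20 dW2]].
exists (fun s => W1 s *m W2 s); split=> [s | |]; first exact: orthmxM.
  by rewrite W10 W20 mulmx1.
by have := is_mx_deriveM dW1 dW2; rewrite W10 W20 mulmx1 mul1mx.
Qed.

Lemma orth_velocity_plane_skew (p q : 'I_n) (y : R) :
  orth_velocity (y *: plane_skew p q).
Proof.
have [<-|pq] := eqVneq p q.
  by rewrite /plane_skew subrr scaler0; exact: orth_velocity0.
exists (fun s => givens p q (s * y)); split=> [s | |].
- exact: givens_orth.
- by rewrite mul0r givens0.
- exact: is_mx_derive_givens.
Qed.

Lemma skew_sum_plane_skew (X : 'M[R]_n) : X^T = - X ->
  X = \sum_p \sum_q (X p q / 2) *: plane_skew p q.
Proof.
move=> Xskew; rewrite [LHS](_ : X = 2^-1 *: (X - X^T)); last first.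
  by rewrite Xskew opprK; apply/matrixP => i j; rewrite !mxE; field.
have -> : X^T = \sum_p \sum_q X p q *: delta_mx q p.
  rewrite {1}(matrix_sum_delta X^T) exchange_big.
  by apply: eq_bigr => p _; apply: eq_bigr => q _; rewrite mxE.
rewrite {1}(matrix_sum_delta X) -sumrB scaler_sumr.
apply: eq_bigr => p _; rewrite -sumrB scaler_sumr; apply: eq_bigr => q _.
by rewrite /plane_skew -scalerBr scalerA mulrC.
Qed.

Lemma orth_velocity_skew {X : 'M[R]_n} : X^T = - X -> orth_velocity X.
Proof.
move=> /skew_sum_plane_skew ->.
do 2!apply: (big_ind orth_velocity orth_velocity0 orth_velocityD) => ? _.
exact: orth_velocity_plane_skew.
Qed.

End OrthogonalVelocity.

Section CurveDerivatives.
Context {R : realType} {n : nat}.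
Implicit Types (F V W : R -> 'M[R]_n) (D X M U : 'M[R]_n).

Lemma orth_curve_velocity_skew {V t D} :
  (forall s, orthmx (V s)) -> is_mx_derive V t D -> ((V t)^T *m D)^T = - ((V t)^T *m D).
Proof.
move=> oV VD; apply/eqP; rewrite -addr_eq0 trmx_mul trmxK; apply/eqP.
exact: is_mx_derive_constant_eq0 oV (is_mx_deriveM (is_mx_derive_tr VD) VD).
Qed.

Lemma is_mx_derive_skew {F t D} :
  (forall s, (F s)^T = - F s) -> is_mx_derive F t D -> D^T = - D.
Proof.
move=> Fskew FD; apply: is_mx_derive_unique (is_mx_derive_tr FD) _.
by rewrite (funext Fskew); exact: is_mx_deriveN.
Qed.

Lemma is_mx_derive_involution {F t D} :
  (forall s, F s *m F s = 1%:M) -> is_mx_derive F t D -> D *m F t + F t *m D = 0.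
Proof. by move=> FF FD; exact: is_mx_derive_constant_eq0 FF (is_mx_deriveM FD FD). Qed.

Lemma is_mx_derive_conj U M {W X} : W 0 = 1%:M -> is_mx_derive W 0 X ->
  is_mx_derive (fun s => U *m W s *m M *m (W s)^T *m U^T) 0
    (U *m (X *m M + M *m X^T) *m U^T).
Proof.
move=> W0 WX.
have := is_mx_deriveM (is_mx_deriveM (is_mx_deriveM (is_mx_deriveM
  (is_mx_derive_cst U) WX) (is_mx_derive_cst M)) (is_mx_derive_tr WX)) (is_mx_derive_cst U^T).
by rewrite W0 trmx1 !(mulmx1, mulmx0, mul0mx, addr0, add0r) mulmxDr !mulmxA.
Qed.

End CurveDerivatives.

Section TangentSpace.
Context {R : realType} {d n : nat}.
Implicit Types (S : set ('I_d.+1 -> 'M[R]_n)) (c Y : 'I_d.+1 -> 'M[R]_n).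

Lemma tangent_spaceP S c Y :
  tangent_space S c Y <-> exists g : R -> 'I_d.+1 -> 'M[R]_n,
    [/\ forall s, S (g s), g 0 = c & forall k, is_mx_derive (fun s => g s k) 0 (Y k)].
Proof.
split=> [[g [gS [g0 gY]]]|[g [gS g0 gY]]].
  by exists g; split=> // k; have [gd <-] := gY k; exact: mx_derivableP.
exists g; do 2!split=> //.
by move=> k; split; [exact: ex_mx_derive (gY k) | exact: mx_derive_val].
Qed.

Lemma tangent_space0 S c : S c -> tangent_space S c (fun _ => 0).
Proof.
by move=> Sc; apply/tangent_spaceP; exists (fun _ => c); split=> // k; exact: is_mx_derive_cst.
Qed.

Lemma is_orth_proj_zero S x : S (fun _ => 0) -> (forall y, S y -> tinner x y = 0) ->
  is_orth_proj S x (fun _ => 0).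
Proof.
move=> S0 xS; split=> // y Sy.
by rewrite (_ : (fun k => _) = x) ?xS // funeqE => k; rewrite subr0.
Qed.

End TangentSpace.

Section Frobenius.
Context {R : realType} {n : nat}.
Implicit Types (A B E J L M S U Y Z : 'M[R]_n).

Lemma frobE A B : frob A B = \tr (A^T *m B).
Proof.
rewrite /frob /mxtrace exchange_big /=; apply: eq_bigr => j _.
by rewrite mxE; apply: eq_bigr => i _; rewrite mxE.
Qed.

Lemma frob_conj U M Y : frob (U *m M *m U^T) Y = frob M (U^T *m Y *m U).
Proof. by rewrite !frobE !trmx_mul trmxK -!mulmxA mxtrace_mulC -!mulmxA. Qed.

Lemma anticomm_conj U Y J : orthmx U ->
  Y *m (U *m J *m U^T) + (U *m J *m U^T) *m Y = 0 ->
  (U^T *m Y *m U) *m J + J *m (U^T *m Y *m U) = 0.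
Proof.
move=> oU /(congr1 (fun A => U^T *m A *m U)); rewrite mulmx0 mul0mx => <-.
by rewrite mulmxDr mulmxDl !mulmxA oU mul1mx -!mulmxA oU mulmx1 !mulmxA.
Qed.

Lemma frob_anticomm_eq0 S J Z : S^T = S -> J^T = J -> Z *m J + J *m Z = 0 ->
  frob (S *m J + J *m S) Z = 0.
Proof.
move=> Ssym Jsym ZJ; rewrite frobE linearD /= !trmx_mul Ssym Jsym mulmxDl mxtraceD.
by rewrite -!mulmxA (mxtrace_mulC J) -!mulmxA -mxtraceD -mulmxDr ZJ mulmx0 mxtrace0.
Qed.

Lemma anticomm_split E Z : Z *m (2%:R *: E - 1%:M) + (2%:R *: E - 1%:M) *m Z = 0 ->
  Z = Z *m E + E *m Z.
Proof.
rewrite mulmxBr mulmxBl mulmx1 mul1mx -scalemxAr -scalemxAl => /matrixP ZE.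
by apply/matrixP => i j; move: (ZE i j); rewrite !mxE; lra.
Qed.

Lemma frob_sandwich L E Z : L^T = - L -> E^T = E -> E *m L *m E = 0 ->
  Z *m (2%:R *: E - 1%:M) + (2%:R *: E - 1%:M) *m Z = 0 ->
  frob (L *m (2%:R *: E - 1%:M) *m L) Z = - \tr (L *m L *m Z).
Proof.
move=> Lskew Esym ELE /anticomm_split ZE.
have LEL_Z : \tr (L *m E *m L *m Z) = 0.
  have ELELZ : E *m (L *m E *m L *m Z) = 0 by rewrite !mulmxA ELE !mul0mx.
  have LELEZ : L *m E *m L *m (E *m Z) = L *m (E *m L *m E) *m Z by rewrite !mulmxA.
  rewrite {1}ZE mulmxDr mxtraceD (mulmxA _ Z E) mxtrace_mulC ELELZ LELEZ ELE.
  by rewrite mulmx0 mul0mx mxtrace0 addr0.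
rewrite frobE.
have -> : (L *m (2%:R *: E - 1%:M) *m L)^T = 2%:R *: (L *m E *m L) - L *m L.
  rewrite !trmx_mul Lskew linearB linearZ /= Esym trmx1 !(mulmxN, mulNmx) opprK.
  by rewrite mulmxBl mul1mx mulmxBr -scalemxAl -scalemxAr !mulmxA.
by rewrite mulmxBl -scalemxAl linearB linearZ /= LEL_Z mulr0 sub0r.
Qed.

End Frobenius.

Section FlagTangent.
Context {R : realType} {nn : nat -> nat} {d n : nat}.
Hypothesis ext_lt : forall k, (k <= d)%N -> (ext nn d n k < ext nn d n k.+1)%N.
Local Notation J := (Jm R nn d n).
Local Notation Flag := (Flag R nn d n).
Implicit Types (c Y : 'I_d.+1 -> 'M[R]_n).

Lemma Flag_sqr {c} k : Flag c -> c k *m c k = 1%:M.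
Proof.
move=> [U [oU ->]]; rewrite -!mulmxA (mulmxA U^T) oU mul1mx (mulmxA (J k)) Jm_sqr mul1mx.
exact: mulmx1C.
Qed.

Lemma Flag_sum {c} : Flag c -> \sum_k c k = (2 - d.+1%:R) *: 1%:M.
Proof.
move=> [U [oU cU]]; under eq_bigr do rewrite cU.
rewrite -mulmx_suml -mulmx_sumr sum_Jm // -scalemxAr -scalemxAl mulmx1.
by rewrite (mulmx1C oU).
Qed.

Lemma tangent_Flag_anticomm {c Y} k :
  tangent_space Flag c Y -> Y k *m c k + c k *m Y k = 0.
Proof.
move=> /tangent_spaceP[g [gF <- gY]].
exact: is_mx_derive_involution (fun s => Flag_sqr k (gF s)) (gY k).
Qed.

Lemma tangent_Flag_sum {c Y} : tangent_space Flag c Y -> \sum_k Y k = 0.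
Proof.
move=> /tangent_spaceP[g [gF _ gY]].
exact: is_mx_derive_constant_eq0 (fun s => Flag_sum (gF s)) (is_mx_derive_sum gY).
Qed.

Lemma tangent_Flag_rotation U X : orthmx U -> X^T = - X ->
  tangent_space Flag (fun k => U *m J k *m U^T)
    (fun k => U *m (X *m J k - J k *m X) *m U^T).
Proof.
move=> oU Xskew; have [W [oW W0 WX]] := orth_velocity_skew Xskew.
apply/tangent_spaceP; exists (fun s k => U *m W s *m J k *m (W s)^T *m U^T); split.
- move=> s; exists (U *m W s); split=> [|k]; first exact: orthmxM.
  by rewrite trmx_mul !mulmxA.
- by apply/funext => k; rewrite W0 trmx1 !mulmx1.
- by move=> k; have := is_mx_derive_conj U (J k) W0 WX; rewrite Xskew mulmxN.
Qed.

End FlagTangent.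

Theorem lemma4p5 (R : realType) (n d : nat) (nn : nat -> nat)
  (hnn : forall k : nat, (k <= d)%N -> (ext nn d n k < ext nn d n k.+1)%N)
  (V : R -> 'M[R]_n)
  (hVO : forall s, orthmx (V s))
  (hVd : forall s, mx_derivable V s)
  (t : R)
  (hLd : mx_derivable (fun s => (V s)^T *m mx_deriv V s) t)
  (hLblk : forall s (k : 'I_d.+1) (i j : 'I_n), in_block nn d n k i ->
      in_block nn d n k j -> ((V s)^T *m mx_deriv V s) i j = 0) :
  let Lam := (V t)^T *m mx_deriv V t in
  let dLam := mx_deriv (fun s => (V s)^T *m mx_deriv V s) t in
  let J := Jm R nn d n in
  let c := fun k => V t *m J k *m (V t)^T in
  let T1 := fun k => V t *m (dLam *m J k - J k *m dLam) *m (V t)^T in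
  let T2 := fun k => V t *m (Lam *m Lam *m J k + J k *m (Lam *m Lam)) *m (V t)^T in
  let T3 := fun k => V t *m (Lam *m J k *m Lam) *m (V t)^T in
  let TS := tangent_space (Flag R nn d n) c in
  [/\ TS T1, is_orth_proj TS T2 (fun _ => 0) & is_orth_proj TS T3 (fun _ => 0)].
Proof.
move=> Lam dLam J c T1 T2 T3 TS.
have Lam_skew s : ((V s)^T *m mx_deriv V s)^T = - ((V s)^T *m mx_deriv V s).
  exact: orth_curve_velocity_skew hVO (mx_derivableP (hVd s)).
have TS0 : TS (fun _ => 0) by apply: tangent_space0; exists (V t).
pose Z (y : 'I_d.+1 -> 'M[R]_n) k := (V t)^T *m y k *m V t.
have Z_anticomm y k : TS y -> Z y k *m J k + J k *m Z y k = 0.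
  by move=> /(tangent_Flag_anticomm k); exact: anticomm_conj.
split.
- exact/tangent_Flag_rotation/(is_mx_derive_skew Lam_skew (mx_derivableP hLd)).
- apply: is_orth_proj_zero => // y TSy; rewrite /tinner big1 // => k _.
  rewrite frob_conj frob_anticomm_eq0 ?Z_anticomm ?tr_Jm //.
  by rewrite trmx_mul Lam_skew mulNmx mulmxN opprK.
- apply: is_orth_proj_zero => // y TSy.
  rewrite /tinner (eq_bigr (fun k => - \tr (Lam *m Lam *m Z y k))) => [|k _]; last first.
    rewrite frob_conj /J JmE; apply: frob_sandwich.
    + exact: Lam_skew.
    + exact: tr_block_proj.
    + by apply: block_proj_sandwich => i j; exact: hLblk.
    + by rewrite -JmE; exact: Z_anticomm.
  rewrite sumrN -linear_sum -mulmx_sumr /Z -mulmx_suml -mulmx_sumr.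
  by rewrite (tangent_Flag_sum hnn TSy) mulmx0 mul0mx mulmx0 linear0 oppr0.
Qed.
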